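(* Let $\mathcal{P},\mathcal{S}$ be patterns, let $P\in\mathbb{R}^{n\times n}(\mathcal{P})$ be a reversible stochastic matrix with stationary distribution $\boldsymbol{\pi}$, $\hat{\boldsymbol{\pi}}=\boldsymbol{\pi}^{1/2}$ entrywise, and let \[ \mathcal{M}_{P,\boldsymbol{\pi}}=\Big\{X\in\mathbb{R}^{n\times n}_{\mathrm{exact}}(\mathcal{P}\cup\mathcal{S}) : X=X^\top,\ X\hat{\boldsymbol{\pi}}=\hat{\boldsymbol{\pi}},\ X_{ij}>0\text{ if }\{i,j\}\in\mathcal{S},\ X_{ij}=\tfrac{\hat\pi_i}{\hat\pi_j}P_{ij}\text{ if }\{i,j\}\notin\mathcal{S}\Big\}. \] Then for every $X\in\mathcal{M}_{P,\boldsymbol{\pi}}$, the tangent space of $\mathcal{M}_{P,\boldsymbol{\pi}}$ at $X$ (the set of velocities $\dot\gamma(0)$ of smooth curves $\gamma$ in $\mathcal{M}_{P,\boldsymbol{\pi}}$ with $\gamma(0)=X$) is \[ \mathcal{T}_X\mathcal{M}_{P,\boldsymbol{\pi}}=\{\xi\in\mathbb{R}^{n\times n}(\mathcal{S}) : \xi=\xi^\top,\ \xi\hat{\boldsymbol{\pi}}=0\}. \]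
   Context: A stochastic matrix is nonnegative with row sums $1$; it is reversible if irreducible and its (unique, positive) stationary distribution $\boldsymbol{\pi}$ (probability vector with $\boldsymbol{\pi}^\top P=\boldsymbol{\pi}^\top$) satisfies $\pi_iP_{ij}=\pi_jP_{ji}$ for all $i,j$. A pattern is a set of unordered pairs $\{i,j\}$, $1\le i,j\le n$, containing $\{i,i\}$ for all $i$. $\mathbb{R}^{n\times n}(\mathcal{S})$ is the set of real $n\times n$ matrices $\Delta$ with $\Delta_{ij}=\Delta_{ji}=0$ whenever $\{i,j\}\notin\mathcal{S}$; $\mathbb{R}^{n\times n}_{\mathrm{exact}}(\mathcal{S})$ is the set of real $n\times n$ matrices $\Delta$ with ($\Delta_{ij}\ne0$ and $\Delta_{ji}\ne0$) if and only if $\{i,j\}\in\mathcal{S}$. *)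

From HB Require Import structures.
From mathcomp Require Import all_boot all_order all_algebra.
From mathcomp Require Import all_classical all_reals all_analysis.
Set Implicit Arguments. Unset Strict Implicit. Unset Printing Implicit Defensive.
Import Order.TTheory GRing.Theory Num.Theory.
Local Open Scope ring_scope.

Section Defs.
Variables (R : realType) (n : nat).

(* A pattern: set of unordered pairs {i,j} containing all {i,i}; encoded as a
   symmetric reflexive relation, {i,j} \in S  <->  S i j. *)
Definition is_pattern (S : rel 'I_n) : Prop :=
  (forall i, S i i) /\ (forall i j, S i j = S j i).

Definition pattern_union (S1 S2 : rel 'I_n) : rel 'I_n :=
  fun i j => S1 i j || S2 i j.

Definition in_pattern (S : rel 'I_n) (D : 'M[R]_n) : Prop :=
  forall i j, ~~ S i j -> D i j = 0 /\ D j i = 0.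

Definition in_pattern_exact (S : rel 'I_n) (D : 'M[R]_n) : Prop :=
  forall i j, (D i j != 0 /\ D j i != 0) <-> S i j.

Definition stochastic (P : 'M[R]_n) : Prop :=
  (forall i j, 0 <= P i j) /\ (forall i, \sum_j P i j = 1).

Definition irreducible (P : 'M[R]_n) : Prop :=
  forall i j, exists k : nat, 0 < (P ^+ k) i j.

Definition stationary_distribution (P : 'M[R]_n) (pi : 'rV[R]_n) : Prop :=
  (forall i, 0 <= pi 0 i) /\ \sum_i pi 0 i = 1 /\ pi *m P = pi.

Definition reversible (P : 'M[R]_n) (pi : 'rV[R]_n) : Prop :=
  [/\ stochastic P, irreducible P, stationary_distribution P pi,
      (forall i, 0 < pi 0 i) &
      (forall i j, pi 0 i * P i j = pi 0 j * P j i)].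

Definition sqrt_vec (pi : 'rV[R]_n) : 'cV[R]_n := \col_i Num.sqrt (pi 0 i).

Definition Mset (Pp S : rel 'I_n) (P : 'M[R]_n) (pi : 'rV[R]_n) (X : 'M[R]_n)
  : Prop :=
  let ph := sqrt_vec pi in
  [/\ in_pattern_exact (pattern_union Pp S) X,
      X^T = X,
      X *m ph = ph,
      (forall i j, S i j -> 0 < X i j) &
      (forall i j, ~~ S i j -> X i j = ph i 0 / ph j 0 * P i j)].

Definition smooth_curve (gamma : R -> 'M[R]_n) (e : R) : Prop :=
  forall (i j : 'I_n) (k : nat) (t : R), `|t| < e ->
    derivable (derive1n k (fun s => gamma s i j)) t 1.

Definition velocity0 (gamma : R -> 'M[R]_n) : 'M[R]_n :=
  \matrix_(i, j) derive1 (fun s => gamma s i j) 0.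

Definition tangent_space (M : 'M[R]_n -> Prop) (X : 'M[R]_n) (xi : 'M[R]_n)
  : Prop :=
  exists (gamma : R -> 'M[R]_n) (e : R),
    [/\ 0 < e, smooth_curve gamma e,
        (forall t, `|t| < e -> M (gamma t)),
        gamma 0 = X & velocity0 gamma = xi].

End Defs.

From HB Require Import structures.
From mathcomp Require Import all_boot all_order all_algebra.
From mathcomp Require Import all_classical all_reals all_analysis.
Import Order.TTheory GRing.Theory Num.Theory numFieldNormedType.Exports.
Set Implicit Arguments. Unset Strict Implicit. Unset Printing Implicit Defensive.
Local Open Scope classical_set_scope.
Local Open Scope ring_scope.

(* Every constraint defining [Mset] other than positivity on [S] is affine, so
   differentiating it along a curve forces the velocity into the linear space
   on the right.  Conversely, for [xi] in that space the straight line
   [X + t xi] satisfies all affine constraints for every [t], and the finitely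
   many strict inequalities [0 < X i j] survive for [t] small. *)

Section RealFunctions.
Variable R : realType.

Lemma is_derive_affine (a b t : R) : is_derive t 1 (fun s : R => a + s * b) b.
Proof.
have -> : (fun s : R => a + s * b) = cst a + b \o* id by apply/funext.
have db : derivable (b \o* id) t 1 by apply: derivableM.
apply: DeriveDef; first exact: derivableD.
by rewrite deriveD // derive_cst deriveMr // derive_id mulr1 add0r.
Qed.

Lemma derive1_affine (a b : R) : derive1 (fun s : R => a + s * b) = cst b.
Proof. by apply/funext => t; rewrite derive1E; have [] := is_derive_affine a b t. Qed.

Lemma derivable_derive1n_affine (k : nat) (a b t : R) :
  derivable (derive1n k (fun s : R => a + s * b)) t 1.
Proof.
elim: k a b => [|k IHk] a b; first by rewrite derive1n0; have [] := is_derive_affine a b t.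
rewrite derive1Sn derive1_affine.
have -> : cst b = (fun s : R => b + s * 0) by apply/funext => s; rewrite mulr0 addr0.
exact: IHk.
Qed.

Lemma derive1_eq_on_ball0 (f g : R -> R) (e : R) : 0 < e ->
  (forall t, `|t| < e -> f t = g t) -> derive1 f 0 = derive1 g 0.
Proof.
move=> e_gt0 fg; rewrite !derive1E; apply: near_eq_derive.
near=> t; apply: fg; near: t.
by exists e => // z /=; rewrite sub0r normrN.
Unshelve. all: by end_near.
Qed.

Lemma derive1_sum_mulr (n : nat) (g : 'I_n -> R -> R) (c : 'I_n -> R) :
  (forall j, derivable (g j) 0 1) ->
  derive1 (fun s => \sum_j g j s * c j) 0 = \sum_j derive1 (g j) 0 * c j.
Proof.
move=> dg.
have dgc j : is_derive (0 : R) 1 (c j \o* g j) (derive1 (g j) 0 * c j).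
  apply: DeriveDef; first exact: derivableM.
  by rewrite deriveMr // derive1E mulrC.
by have [_ <-] := is_derive_sum dgc; rewrite fct_sumE derive1E.
Qed.

Lemma small_perturbation_gt0 (I : finType) (P : pred I) (a b : I -> R) :
  (forall i, P i -> 0 < a i) ->
  exists2 e : R, 0 < e &
    forall t, `|t| < e -> forall i, P i -> 0 < a i + t * b i.
Proof.
move=> a_gt0.
have : \forall t \near (0 : R), forall i, P i -> 0 < a i + t * b i.
  apply: (@filter_forall R I (fun i t => P i -> 0 < a i + t * b i) (nbhs (0 : R)) _) => i.
  have [Pi|nPi] := boolP (P i); last by apply: filterE => t /negP.
  have line_cvg : (fun t : R => a i + t * b i) @ 0 --> a i + 0 * b i.
    by apply: cvgD; [exact: cvg_cst | apply: cvgMl; exact: cvg_id].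
  rewrite mul0r addr0 in line_cvg.
  near=> t => _; near: t; exact: cvgr_gt (a i) line_cvg 0 (a_gt0 i Pi).
move=> /nbhs_normP [e e_gt0 near_e]; exists e => // t te.
by apply: near_e; rewrite /ball_ /= sub0r normrN.
Unshelve. all: by end_near.
Qed.

End RealFunctions.

Section Curves.
Variables (R : realType) (n : nat) (gamma : R -> 'M[R]_n) (e : R).
Hypothesis e_gt0 : 0 < e.

Lemma smooth_curve_derivable0 : smooth_curve gamma e ->
  forall i j, derivable (fun s => gamma s i j) 0 1.
Proof. by move=> smooth i j; have := smooth i j 0%N 0; rewrite derive1n0 normr0; apply. Qed.

Lemma velocity0_entry_cst (i j : 'I_n) (c : R) :
  (forall t, `|t| < e -> gamma t i j = c) -> velocity0 gamma i j = 0.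
Proof. by move=> gamma_c; rewrite mxE (@derive1_eq_on_ball0 _ _ (cst c) e) ?derive1_cst. Qed.

Lemma velocity0_sym : (forall t, `|t| < e -> (gamma t)^T = gamma t) ->
  (velocity0 gamma)^T = velocity0 gamma.
Proof.
move=> gamma_sym; apply/matrixP => i j; rewrite !mxE.
by apply: (derive1_eq_on_ball0 e_gt0) => t /gamma_sym {2}<-; rewrite mxE.
Qed.

Lemma velocity0_mulmx_cst (p : nat) (v w : 'M[R]_(n, p)) : smooth_curve gamma e ->
  (forall t, `|t| < e -> gamma t *m v = w) -> velocity0 gamma *m v = 0.
Proof.
move=> /smooth_curve_derivable0 gamma_der gamma_v; apply/matrixP => i k.
rewrite !mxE; under eq_bigr do rewrite mxE.
rewrite -derive1_sum_mulr // (@derive1_eq_on_ball0 _ _ (cst (w i k)) e) ?derive1_cst //.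
by move=> t /gamma_v <-; rewrite mxE.
Qed.

End Curves.

Section Line.
Variables (R : realType) (n : nat) (X xi : 'M[R]_n).

Lemma line_entry (i j : 'I_n) :
  (fun t : R => (X + t *: xi) i j) = (fun t => X i j + t * xi i j).
Proof. by apply/funext => t; rewrite !mxE. Qed.

Lemma smooth_curve_line (e : R) : smooth_curve (fun t => X + t *: xi) e.
Proof. by move=> i j k t _; rewrite line_entry; apply: derivable_derive1n_affine. Qed.

Lemma velocity0_line : velocity0 (fun t => X + t *: xi) = xi.
Proof. by apply/matrixP => i j; rewrite mxE line_entry derive1_affine. Qed.

End Line.

Section Tangent.
Variables (R : realType) (n : nat) (Pp S : rel 'I_n) (P : 'M[R]_n) (pi : 'rV[R]_n).
Hypothesis S_sym : forall i j, S i j = S j i.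

Lemma tangent_space_Mset_sub (X xi : 'M[R]_n) :
  tangent_space (Mset Pp S P pi) X xi ->
  [/\ in_pattern S xi, xi^T = xi & xi *m sqrt_vec pi = 0].
Proof.
case=> gamma [e [e_gt0 smooth inM _ <-]]; split.
- move=> i j nSij; have nSji : ~~ S j i by rewrite S_sym.
  by split; apply: (velocity0_entry_cst e_gt0) => t /inM [_ _ _ _ off]; apply: off.
- by apply: (velocity0_sym e_gt0) => t /inM [].
- by apply: (velocity0_mulmx_cst (w := sqrt_vec pi) e_gt0 smooth) => t /inM [].
Qed.

Lemma Mset_line (X xi : 'M[R]_n) (t : R) :
  Mset Pp S P pi X -> in_pattern S xi -> xi^T = xi -> xi *m sqrt_vec pi = 0 ->
  (forall i j, S i j -> 0 < X i j + t * xi i j) ->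
  Mset Pp S P pi (X + t *: xi).
Proof.
move=> [X_exact X_sym X_ph X_pos X_off] xi_pat xi_sym xi_ph line_pos.
have xi_off i j : ~~ S i j -> xi i j = 0 by move/xi_pat => [].
split.
- move=> i j; rewrite !mxE; have [Sij|nSij] := boolP (S i j).
    rewrite /pattern_union Sij orbT; split => // _.
    by rewrite !gt_eqF // line_pos // -S_sym.
  have nSji : ~~ S j i by rewrite S_sym.
  by rewrite !xi_off // !mulr0 !addr0; apply: X_exact.
- by rewrite raddfD /= linearZ /= X_sym xi_sym.
- by rewrite mulmxDl -scalemxAl xi_ph scaler0 addr0.
- by move=> i j Sij; rewrite !mxE; apply: line_pos.
- by move=> i j nSij; rewrite -X_off // !mxE xi_off // mulr0 addr0.
Qed.

Lemma tangent_space_Mset_line (X xi : 'M[R]_n) :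
  Mset Pp S P pi X -> in_pattern S xi -> xi^T = xi -> xi *m sqrt_vec pi = 0 ->
  tangent_space (Mset Pp S P pi) X xi.
Proof.
move=> MX xi_pat xi_sym xi_ph; have [_ _ _ X_pos _] := MX.
have [e e_gt0 line_pos] := small_perturbation_gt0 (fun ij => xi ij.1 ij.2)
  (fun ij : 'I_n * 'I_n => X_pos ij.1 ij.2).
exists (fun t => X + t *: xi), e; split => //.
- exact: smooth_curve_line.
- move=> t /line_pos pos; apply: Mset_line => // i j Sij.
  exact: (pos (i, j)).
- by rewrite scale0r addr0.
- exact: velocity0_line.
Qed.

End Tangent.

Theorem lemma4p5 (R : realType) (n : nat) (Pp S : rel 'I_n)
  (P : 'M[R]_n) (pi : 'rV[R]_n) :
  is_pattern Pp -> is_pattern S ->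
  in_pattern Pp P -> reversible P pi ->
  forall X : 'M[R]_n, Mset Pp S P pi X ->
  forall xi : 'M[R]_n,
    tangent_space (Mset Pp S P pi) X xi <->
    [/\ in_pattern S xi, xi^T = xi & xi *m sqrt_vec pi = 0].
Proof.
move=> _ [_ S_sym] _ _ X MX xi; split; first exact: tangent_space_Mset_sub.
by case; apply: tangent_space_Mset_line.
Qed.
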